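(* Let $h$ be a hospital and $k_h=\lceil B_h/\underline{w}_h\rceil$. Define $\mathrm{Ch}_h:2^{X_h}\to2^{X_h}$ by: given $X'\subseteq X_h$, sort $X'$ in non-increasing order of utility per unit wage $f_h(x)/x_W$ (ties broken by a fixed order) and return the first $\min\{k_h,|X'|\}$ contracts. Then $\mathrm{Ch}_h$ satisfies SUB, IRC, LAD and COM.
   Context: Hospital $h$ has a finite set $X_h$ of contracts $x=(d,h,w)$ with wages $x_W=w$, $0<x_W\le B_h$, where $B_h>0$ is its budget; distinct contracts in $X_h$ may involve the same doctor. Its utility is additive: $f_h(x)>0$ and $f_h(Y)=\sum_{x\in Y}f_h(x)$. $w_h(Y)=\sum_{x\in Y}x_W$ for $Y\subseteq X_h$, $\underline{w}_h=\min_{x\in X_h}x_W$. For a map $\mathrm{Ch}_h:2^{X_h}\to2^{X_h}$ with $\mathrm{Ch}_h(Y)\subseteq Y$: SUB means for all $Y''\subseteq Y'\subseteq X_h$, $Y''\setminus\mathrm{Ch}_h(Y'')\subseteq Y'\setminus\mathrm{Ch}_h(Y')$; IRC means for $Y'\subseteq X_h$, $Y''\subseteq X_h\setminus Y'$, if $\mathrm{Ch}_h(Y'\cup Y'')\subseteq Y'$ then $\mathrm{Ch}_h(Y')=\mathrm{Ch}_h(Y'\cup Y'')$; LAD means for all $Y''\subseteq Y'\subseteq X_h$, $|\mathrm{Ch}_h(Y'')|\le|\mathrm{Ch}_h(Y')|$; COM means for all $Y''\subseteq Y'\subseteq X_h$ with $w_h(Y'')\le\max\{B_h,w_h(\mathrm{Ch}_h(Y'))\}$,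 $f_h(\mathrm{Ch}_h(Y'))\ge f_h(Y'')$. *)

From mathcomp Require Import all_boot all_order all_algebra.
Set Implicit Arguments. Unset Strict Implicit. Unset Printing Implicit Defensive.
Import Order.TTheory GRing.Theory Num.Theory.
Local Open Scope ring_scope.

(* A hospital's contract set X_h is a finite type X; wages w, utilities f,
   budget B, all in an archimedean real field R. *)
Section Hospital.
Variables (R : archiRealFieldType) (X : finType).

Definition wsum (w : X -> R) (Y : {set X}) : R := \sum_(x in Y) w x.
Definition fsum (f : X -> R) (Y : {set X}) : R := \sum_(x in Y) f x.

(* underline w_h = min_{x in X_h} x_W ; the default B is harmless because
   every wage is <= B (and X empty makes everything trivial). *)
Definition wmin (w : X -> R) (B : R) : R := \big[Num.min/B]_(x : X) w x.

Definition kh (w : X -> R) (B : R) : nat := `|Num.ceil (B / wmin w B)|%N.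

Definition prec (f w : X -> R) (tie : rel X) : rel X :=
  fun x y => (f y / w y < f x / w x) || ((f x / w x == f y / w y) && tie x y).

Definition Ch (f w : X -> R) (B : R) (tie : rel X) (Y : {set X}) : {set X} :=
  [set x in take (kh w B) (sort (prec f w tie) (enum Y))].

Definition SUB (C : {set X} -> {set X}) : Prop :=
  forall Y2 Y1 : {set X}, Y2 \subset Y1 -> (Y2 :\: C Y2) \subset (Y1 :\: C Y1).

Definition IRC (C : {set X} -> {set X}) : Prop :=
  forall Y1 Y2 : {set X}, [disjoint Y2 & Y1] ->
    C (Y1 :|: Y2) \subset Y1 -> C Y1 = C (Y1 :|: Y2).

Definition LAD (C : {set X} -> {set X}) : Prop :=
  forall Y2 Y1 : {set X}, Y2 \subset Y1 -> (#|C Y2| <= #|C Y1|)%N.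

Definition COM (f w : X -> R) (B : R) (C : {set X} -> {set X}) : Prop :=
  forall Y2 Y1 : {set X}, Y2 \subset Y1 ->
    wsum w Y2 <= Num.max B (wsum w (C Y1)) ->
    fsum f Y2 <= fsum f (C Y1).

End Hospital.

From mathcomp Require Import all_boot all_order all_algebra.
From mathcomp Require Import zify.
Import Order.TTheory GRing.Theory Num.Theory.
Local Open Scope ring_scope.

Set Implicit Arguments. Unset Strict Implicit. Unset Printing Implicit Defensive.

(* Ch_h keeps the k_h best contracts of X' for the strict total order "higher
   utility per unit wage, ties broken by [tie]", so |Ch_h X'| = min(k_h, |X'|)
   (LAD).  If x is rejected from X' but chosen from a larger X'', then all of
   Ch_h X', which beats x, is chosen from X'' too, giving k_h + 1 choices: hence
   SUB.  IRC follows from SUB and LAD for any choice function.  For COM, either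
   Ch_h X' = X', or Ch_h X' has k_h contracts and wage at least
   k_h * underline w_h >= B_h; in both cases an affordable Y'' of X' costs no
   more than Ch_h X', and as the chosen contracts have the best utility per
   unit wage, the fractional-knapsack exchange argument bounds f_h(Y''). *)

Lemma SUB_LAD_IRC (X : finType) (C : {set X} -> {set X}) :
  SUB C -> LAD C -> IRC C.
Proof.
move=> sub lad Y1 Y2 _ CU_sub1; apply/eqP; rewrite eq_sym eqEcard.
rewrite lad ?subsetUl // andbT; apply/subsetP => x xCU; apply: contraT => xnC1.
have /(subsetP (sub _ _ (subsetUl Y1 Y2))) : x \in Y1 :\: C Y1.
  by rewrite in_setD xnC1 (subsetP CU_sub1).
by rewrite in_setD xCU.
Qed.

Section TopK.
Variables (X : finType) (r : rel X) (k : nat).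
Hypotheses (r_trans : transitive r) (r_total : total r)
  (r_anti : antisymmetric r).

Definition topk (Y : {set X}) : {set X} := [set x in take k (sort r (enum Y))].

Lemma mem_sort_enum (Y : {set X}) : sort r (enum Y) =i Y.
Proof. by move=> x; rewrite mem_sort mem_enum. Qed.

Lemma topk_sub (Y : {set X}) : topk Y \subset Y.
Proof.
by apply/subsetP => x; rewrite inE => /mem_take; rewrite mem_sort_enum.
Qed.

Lemma card_topk (Y : {set X}) : #|topk Y| = minn k #|Y|.
Proof.
rewrite cardsE (card_uniqP _); last by rewrite take_uniq ?sort_uniq ?enum_uniq.
by rewrite size_take_min size_sort cardE.
Qed.

Lemma topk_full (Y : {set X}) : (#|Y| <= k)%N -> topk Y = Y.
Proof.
by move=> Yk; apply/eqP; rewrite eqEcard topk_sub card_topk leq_min Yk leqnn.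
Qed.

Lemma topk_upward (Y : {set X}) (x y : X) :
  x \in topk Y -> y \in Y -> r y x -> y \in topk Y.
Proof.
have [-> //|neq_yx] := eqVneq y x.
rewrite /topk !inE -(mem_sort_enum Y y); set s := sort r (enum Y) => xk ys ryx.
have xs := mem_take xk; rewrite in_take // in xk; rewrite in_take //.
apply: contraT; rewrite -leqNgt => ky.
have rxy : r x y.
  have := sorted_ltn_nth r_trans x (sort_sorted r_total (enum Y)).
  move=> /(_ (index x s) (index y s)); rewrite -/s !inE !index_mem !nth_index //.
  by apply=> //; apply: leq_trans xk ky.
have /r_anti eq_xy : r x y && r y x by rewrite rxy ryx.
by rewrite eq_xy eqxx in neq_yx.
Qed.

Lemma topk_dominates (Y : {set X}) (x y : X) :
  x \in Y -> x \notin topk Y -> y \in topk Y -> r y x.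
Proof.
move=> xY xnk yk; have /orP[//|rxy] := r_total y x.
by rewrite (topk_upward yk xY rxy) in xnk.
Qed.

Lemma topk_rejected_mono (Y2 Y1 : {set X}) (x : X) :
  Y2 \subset Y1 -> x \in Y2 -> x \notin topk Y2 -> x \notin topk Y1.
Proof.
move=> sub xY2 xnk2; apply/negP => xk1.
have kept_up : x |: topk Y2 \subset topk Y1.
  apply/subsetP => z; rewrite in_setU1 => /predU1P[-> //|zk2].
  apply: topk_upward xk1 _ (topk_dominates xY2 xnk2 zk2).
  exact/(subsetP sub)/(subsetP (topk_sub Y2)).
have k2_sub : topk Y2 \subset Y2 :\ x.
  apply/subsetP => z zk2; rewrite in_setD1 (subsetP (topk_sub Y2)) // andbT.
  by apply: contraNneq xnk2 => <-.
have := subset_leq_card kept_up; have := subset_leq_card k2_sub.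
have := subset_leq_card sub; have := cardsD1 x Y2.
by rewrite cardsU1 xnk2 xY2 !card_topk; lia.
Qed.

Lemma topk_SUB : SUB topk.
Proof.
move=> Y2 Y1 sub; apply/subsetP => x; rewrite in_setD => /andP[xnk2 xY2].
by rewrite in_setD (topk_rejected_mono sub) // (subsetP sub).
Qed.

Lemma topk_LAD : LAD topk.
Proof. by move=> Y2 Y1 /subset_leq_card; rewrite !card_topk; lia. Qed.

Lemma topk_IRC : IRC topk.
Proof. exact: SUB_LAD_IRC topk_SUB topk_LAD. Qed.

End TopK.

Section RatioOrder.
Variables (R : archiRealFieldType) (X : finType) (f w : X -> R) (tie : rel X).

Lemma prec_ratio_le (x y : X) : prec f w tie x y -> f y / w y <= f x / w x.
Proof. by case/orP => [/ltW //|/andP[/eqP-> _]]. Qed.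

Lemma prec_trans : transitive tie -> transitive (prec f w tie).
Proof.
move=> tie_trans y x z.
case/orP => [lt_yx|/andP[/eqP eq_xy t_xy]]; case/orP => [lt_zy|/andP[/eqP eq_yz t_yz]].
- by rewrite /prec (lt_trans lt_zy lt_yx).
- by rewrite /prec -eq_yz lt_yx.
- by rewrite /prec eq_xy lt_zy.
- by rewrite /prec eq_xy eq_yz eqxx (tie_trans _ _ _ t_xy t_yz) orbT.
Qed.

Lemma prec_total : total tie -> total (prec f w tie).
Proof.
move=> tie_total x y; rewrite /prec.
by case: ltgtP => //= ->; rewrite eqxx tie_total.
Qed.

Lemma prec_anti : antisymmetric tie -> antisymmetric (prec f w tie).
Proof.
move=> tie_anti x y /andP[]; rewrite /prec.
case/orP => [lt_yx|/andP[/eqP eq_xy t_xy]]; case/orP => [lt_xy|/andP[/eqP eq_yx t_yx]].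
- by move: (lt_trans lt_yx lt_xy); rewrite ltxx.
- by move: lt_yx; rewrite eq_yx ltxx.
- by move: lt_xy; rewrite eq_xy ltxx.
- by apply: tie_anti; rewrite t_xy t_yx.
Qed.

End RatioOrder.

Lemma ler_sum_subset (R : numDomainType) (X : finType) (F : X -> R) (A B : {set X}) :
  (forall x, 0 <= F x) -> A \subset B -> \sum_(x in A) F x <= \sum_(x in B) F x.
Proof.
move=> F_ge0 /setIidPl AB; rewrite [leRHS](big_setID A) /= setIC AB lerDl.
exact: sumr_ge0.
Qed.

Section Exchange.
Variables (R : realFieldType) (X : finType) (f w : X -> R).
Hypotheses (w_gt0 : forall x, 0 < w x) (f_ge0 : forall x, 0 <= f x).

Lemma ler_sum_dominated_ratio (D E : {set X}) :
  \sum_(x in D) w x <= \sum_(y in E) w y ->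
  {in D & E, forall x y, f x / w x <= f y / w y} ->
  \sum_(x in D) f x <= \sum_(y in E) f y.
Proof.
move=> wDE ratio_le.
(* The maximum over an empty D is 0, hence the need for [f_ge0]. *)
pose rmax := \big[Num.max/0]_(x in D) (f x / w x).
have ratio_ge0 x : 0 <= f x / w x by rewrite divr_ge0 // ltW.
have fD x : x \in D -> f x <= rmax * w x.
  by move=> xD; rewrite -ler_pdivrMr // /rmax (bigD1 x) //= le_max lexx.
have fE y : y \in E -> rmax * w y <= f y.
  move=> yE; rewrite -ler_pdivlMr //; apply: (big_ind (fun a => a <= _)) => //.
    by move=> a b; rewrite ge_max => -> ->.
  by move=> x xD; apply: ratio_le.
have rmax_ge0 : 0 <= rmax.
  by apply: (big_ind (fun a => 0 <= a)) => // a b; rewrite le_max => ->.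
apply: le_trans (ler_sum _ fD) _; rewrite -mulr_sumr.
apply: le_trans (ler_sum _ fE); rewrite -mulr_sumr.
exact: ler_wpM2l.
Qed.

Lemma ler_sum_exchange (S T : {set X}) :
  \sum_(x in S) w x <= \sum_(y in T) w y ->
  {in S :\: T & T :\: S, forall x y, f x / w x <= f y / w y} ->
  \sum_(x in S) f x <= \sum_(y in T) f y.
Proof.
move=> wST ratio_le.
rewrite (big_setID T) [leRHS](big_setID S) /= setIC lerD2l.
apply: ler_sum_dominated_ratio ratio_le.
by move: wST; rewrite (big_setID T) [leRHS](big_setID S) /= setIC lerD2l.
Qed.

End Exchange.

Lemma le_ceil_div_mul (R : archiRealFieldType) (a b : R) :
  0 <= a -> 0 < b -> a <= `|Num.ceil (a / b)|%N%:R * b.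
Proof.
move=> a_ge0 b_gt0; have q_ge0 : 0 <= a / b by rewrite divr_ge0 // ltW.
rewrite natr_absz ger0_norm ?ceil_ge0 ?(lt_le_trans (ltrN10 R)) //.
by rewrite -ler_pdivrMr // ceil_ge.
Qed.

Section Budget.
Variables (R : archiRealFieldType) (X : finType) (w : X -> R) (B : R).
Hypotheses (B_gt0 : 0 < B) (w_gt0 : forall x, 0 < w x).

Lemma wmin_gt0 : 0 < wmin w B.
Proof. by apply: (big_ind (fun a => 0 < a)) => // a b; rewrite lt_min => -> ->. Qed.

Lemma wmin_le (x : X) : wmin w B <= w x.
Proof. by rewrite /wmin (bigD1 x) //= ge_min lexx. Qed.

Lemma budget_le_wsum (Y : {set X}) : (kh w B <= #|Y|)%N -> B <= wsum w Y.
Proof.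
move=> kY; apply: le_trans (le_ceil_div_mul (ltW B_gt0) wmin_gt0) _.
apply: le_trans (_ : #|Y|%:R * wmin w B <= _).
  by rewrite ler_pM2r ?wmin_gt0 // ler_nat.
by rewrite mulr_natl -sumr_const /wsum; apply: ler_sum => x _; apply: wmin_le.
Qed.

End Budget.

Section Hospital.
Variables (R : archiRealFieldType) (X : finType) (f w : X -> R) (B : R) (tie : rel X).
Hypotheses (B_gt0 : 0 < B) (w_gt0 : forall x, 0 < w x) (f_gt0 : forall x, 0 < f x).
Hypotheses (tie_total : total tie) (tie_trans : transitive tie)
  (tie_anti : antisymmetric tie).

Lemma ChE : Ch f w B tie = topk (prec f w tie) (kh w B).
Proof. by []. Qed.

Lemma Ch_COM : COM f w B (Ch f w B tie).
Proof.
rewrite ChE => Y2 Y1 sub affordable.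
set C1 := topk _ _ Y1.
have wY2 : wsum w Y2 <= wsum w C1.
  have [Y1_small|Y1_large] := leqP #|Y1| (kh w B).
    by rewrite /C1 topk_full //; apply: ler_sum_subset => // x; apply: ltW.
  apply: le_trans affordable _; rewrite ge_max lexx andbT budget_le_wsum //.
  by rewrite card_topk leq_min leqnn (ltnW Y1_large).
apply: ler_sum_exchange wY2 _ => // [x|x y]; first exact: ltW.
rewrite !in_setD => /andP[xnC1 xY2] /andP[_ yC1]; apply: prec_ratio_le.
apply: topk_dominates xnC1 yC1 => //;
  [exact: prec_trans|exact: prec_total|exact: prec_anti|exact: (subsetP sub)].
Qed.

End Hospital.

Theorem lemma1 (R : archiRealFieldType) (X : finType)
  (f w : X -> R) (B : R) (tie : rel X)
  (hB : 0 < B)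
  (hw : forall x, 0 < w x /\ w x <= B)
  (hf : forall x, 0 < f x)
  (tie_refl : reflexive tie) (tie_total : total tie)
  (tie_trans : transitive tie) (tie_anti : antisymmetric tie) :
  let C := Ch f w B tie in
  [/\ SUB C, IRC C, LAD C & COM f w B C].
Proof.
have w_gt0 x : 0 < w x by case: (hw x).
have prec_tr : transitive (prec f w tie) by exact: prec_trans.
have prec_tot : total (prec f w tie) by exact: prec_total.
have prec_ant : antisymmetric (prec f w tie) by exact: prec_anti.
split; last exact: Ch_COM.
- exact: topk_SUB.
- exact: topk_IRC.
- exact: topk_LAD.
Qed.
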